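(* Let $\Bbbk$ be a field of characteristic $\ne2$, $V$ a $3$-dimensional vector space over $\Bbbk$, $0\ne q\in\Bbbk$, and let $Y:V^{\otimes2}\to V^{\otimes2}$ be a linear operator with $\mathrm{Im}\,Y\subset\mathrm{Alt}_2$. Then $Y$ satisfies both (A) $Yw=(q+1)w$ for all $w\in\mathrm{Alt}_2$, and (B) $(\mathrm{Id}_V\otimes Y)(Y\otimes\mathrm{Id}_V)w-qw\in\mathrm{Alt}_3$ for all $w\in V\otimes\mathrm{Alt}_2$, if and only if there exist vectors $a,b\in V$ and a symmetric bilinear form $g:V\times V\to\Bbbk$ such that $(q-1)^2=-4\Delta$ with $\Delta=g(a,a)g(b,b)-g(a,b)^2$, and $$Y(xy)=g(x,y)\,a\wedge b+x\wedge Ty+y\wedge Tx+\frac{q+1}{2}\,x\wedge y\qquad(x,y\in V),$$ where $T:V\to V$ is given by $Tv=g(b,v)\,a-g(a,v)\,b$. Moreover, such an operator $Y$ also satisfies $$(\mathrm{Id}_V\otimes Y)(Y\otimes\mathrm{Id}_V)(\mathrm{Id}_V\otimes Y)-q(\mathrm{Id}_V\otimes Y)=(Y\otimes\mathrm{Id}_V)(\mathrm{Id}_V\otimes Y)(Y\otimes\mathrm{Id}_V)-q(Y\otimes\mathrm{Id}_V).$$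
   Context: For $x,y,z\in V$ write $xy=x\otimes y$, $xyz=x\otimes y\otimes z$, $x\wedge y=xy-yx$ and $x\wedge y\wedge z=xyz+yzx+zxy-zyx-xzy-yxz$. $\mathrm{Alt}_2=\mathrm{span}\{x\wedge y\}\subset V^{\otimes2}$ (the alternating tensors, dimension 3) and $\mathrm{Alt}_3=\mathrm{span}\{x\wedge y\wedge z\}\subset V^{\otimes 3}$ (dimension 1). *)

From HB Require Import structures.
From mathcomp Require Import all_boot all_order all_algebra.
Set Implicit Arguments. Unset Strict Implicit. Unset Printing Implicit Defensive.
Import Order.TTheory GRing.Theory Num.Theory.
Local Open Scope ring_scope.

(* The 3-dimensional space V is realised as k^3 (row vectors) with its
   standard basis; tensor powers are realised by coordinates. *)
Notation V k := 'rV[k]_3.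
Notation T2 k := {ffun 'I_3 * 'I_3 -> k^o}.
Notation T3 k := {ffun 'I_3 * 'I_3 * 'I_3 -> k^o}.

Section Tensors.
Variable k : fieldType.
Local Notation V := (V k).
Local Notation T2 := (T2 k).
Local Notation T3 := (T3 k).

Definition tens2 (x y : V) : T2 := [ffun ij => x ord0 ij.1 * y ord0 ij.2].
Definition tens3 (x y z : V) : T3 :=
  [ffun t => x ord0 t.1.1 * y ord0 t.1.2 * z ord0 t.2].
Definition tens12 (x : V) (u : T2) : T3 := [ffun t => x ord0 t.1.1 * u (t.1.2, t.2)].

Definition wedge2 (x y : V) : T2 := tens2 x y - tens2 y x.
Definition wedge3 (x y z : V) : T3 :=
  tens3 x y z + tens3 y z x + tens3 z x y
  - tens3 z y x - tens3 x z y - tens3 y x z.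

Definition Alt2 (w : T2) : Prop :=
  exists n (c : 'I_n -> k) (x y : 'I_n -> V),
    w = \sum_(i < n) c i *: wedge2 (x i) (y i).
Definition Alt3 (w : T3) : Prop :=
  exists n (c : 'I_n -> k) (x y z : 'I_n -> V),
    w = \sum_(i < n) c i *: wedge3 (x i) (y i) (z i).

Definition V_Alt2 (w : T3) : Prop :=
  exists n (x : 'I_n -> V) (u : 'I_n -> T2),
    (forall i, Alt2 (u i)) /\ w = \sum_(i < n) tens12 (x i) (u i).

Definition IdY (Y : T2 -> T2) (w : T3) : T3 :=
  [ffun t => Y [ffun jl : 'I_3 * 'I_3 => w (t.1.1, jl.1, jl.2)] (t.1.2, t.2)].
Definition YId (Y : T2 -> T2) (w : T3) : T3 :=
  [ffun t => Y [ffun ij : 'I_3 * 'I_3 => w (ij.1, ij.2, t.2)] (t.1.1, t.1.2)].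

End Tensors.

(* Write [Y (e_i e_j) = *s_ij + h e_i /\ e_j], where [*] is the Hodge star
   identifying [V] with [Alt_2].  As [Im Y] lies in [Alt_2], condition (A) says
   that [h = (q + 1) / 2] and that [s] is an arbitrary symmetric bilinear map
   [V x V -> V].  Condition (B), evaluated on the tensors [e_x (x) *e_m] spanning
   [V (x) Alt_2], is a system of quadratic equations in the 18 numbers [s_ij^m];
   suitable linear combinations of them say that the 3 x 6 matrix
   [P_m(ij) = s_mi^j + s_mj^i] has rank at most one, [P = 2 c (x) G], and that
   [q = h^2 + c^T adj(G) c].  Solving for [s] as one solves for Christoffel
   symbols gives [s_ij^m = c_i G_jm + c_j G_im - c_m G_ij]: this is the formula
   of the theorem for [c = a x b] and [g] the form with Gram matrix [G], and by
   Lagrange's identity [c^T adj(G) c = Delta], so that [q = h^2 + Delta] reads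
   [(q - 1)^2 = -4 Delta].  Conversely, for this family (B) and the braid
   relation are polynomial identities in the coordinates; for the braid relation
   it suffices to check one coordinate on basis tensors, since by (B) and its
   mirror image the difference of the two sides lies in [Alt_3]. *)

From HB Require Import structures.
From mathcomp Require Import all_boot all_order all_algebra ring.
Import GRing.Theory.
Set Implicit Arguments. Unset Strict Implicit. Unset Printing Implicit Defensive.
Local Open Scope ring_scope.

Lemma scaleoE (k : fieldType) (c x : k) : c *: (x : k^o) = c * x.
Proof. by []. Qed.

Lemma scale_ffunE (k : fieldType) (T : finType) (f : {ffun T -> k^o}) c t :
  (c *: f) t = c * f t.
Proof. by rewrite ffunE. Qed.

Lemma sub_ffunE (k : fieldType) (T : finType) (f g : {ffun T -> k^o}) t :
  (f - g) t = f t - g t.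
Proof. by rewrite !ffunE. Qed.

(* The coordinates of [T2 k] and [T3 k] live in [k^o], which [ring] does not
   recognise as the field [k]. *)
Ltac kring k := rewrite ?scaleoE;
  match goal with |- @eq _ ?a ?b => change (@eq (GRing.Field.sort k) a b); ring end.

Notation i0 := (@Ordinal 3 0 isT).
Notation i1 := (@Ordinal 3 1 isT).
Notation i2 := (@Ordinal 3 2 isT).

Lemma ord3P (P : 'I_3 -> Prop) : P i0 -> P i1 -> P i2 -> forall i, P i.
Proof.
by move=> P0 P1 P2 [[|[|[|m]]] lt_m3] //; rewrite (bool_irrelevance lt_m3 isT).
Qed.

Definition sum3 (R : nmodType) (F : 'I_3 -> R) : R := F i0 + F i1 + F i2.

Lemma big_ord3 (R : nmodType) (F : 'I_3 -> R) : \sum_(i < 3) F i = sum3 F.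
Proof.
rewrite !big_ord_recl big_ord0 addr0 addrA /sum3.
by congr (F _ + F _ + F _); apply: val_inj.
Qed.

Lemma eq_sum3 (R : nmodType) (F G : 'I_3 -> R) :
  (forall i, F i = G i) -> sum3 F = sum3 G.
Proof. by move=> FG; rewrite /sum3 !FG. Qed.

(* [cyc1 m, cyc2 m] is the cyclic successor pair of [m], so that
   [e_(cyc1 m) /\ e_(cyc2 m)] is the Hodge dual of [e_m]. *)
Definition cyc1 (m : nat) : 'I_3 := match m with 0%N => i1 | 1%N => i2 | _ => i0 end.
Definition cyc2 (m : nat) : 'I_3 := match m with 0%N => i2 | 1%N => i0 | _ => i1 end.
Definition ord_of (n : nat) : 'I_3 := match n with 0%N => i0 | 1%N => i1 | _ => i2 end.

Section Coordinates.
Variable k : fieldType.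

(* Index functions are written by pattern matching on [nat] so that [cbv]
   evaluates them; ordinal arguments are read through [nat_of_ord]. *)
Definition kdelta (i j : nat) : k :=
  match i, j with 0%N, 0%N | 1%N, 1%N | 2%N, 2%N => 1 | _, _ => 0 end.

Definition levi (i j l : 'I_3) : k :=
  match nat_of_ord i, nat_of_ord j, nat_of_ord l with
  | 0%N, 1%N, 2%N | 1%N, 2%N, 0%N | 2%N, 0%N, 1%N => 1
  | 2%N, 1%N, 0%N | 0%N, 2%N, 1%N | 1%N, 0%N, 2%N => -1
  | _, _, _ => 0 end.

Definition hodge (f : nat -> k) (u v : 'I_3) : k :=
  match nat_of_ord u, nat_of_ord v with
  | 1%N, 2%N => f 0%N | 2%N, 1%N => - f 0%N
  | 2%N, 0%N => f 1%N | 0%N, 2%N => - f 1%N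
  | 0%N, 1%N => f 2%N | 1%N, 0%N => - f 2%N
  | _, _ => 0 end.

(* A symmetric array indexed by [i, j] is read from its entries with [i <= j]. *)
Definition utri (G : nat -> nat -> k) (i j : nat) : k :=
  match i, j with
  | 1%N, 0%N => G 0%N 1%N | 2%N, 0%N => G 0%N 2%N | 2%N, 1%N => G 1%N 2%N
  | a, b => G a b end.

Definition evec (i : 'I_3) : V k := \row_(j < 3) kdelta i j.

Lemma kdeltaE (i j : 'I_3) : kdelta i j = if i == j then 1 else 0.
Proof. by elim/ord3P: i; elim/ord3P: j. Qed.

Lemma kdeltaC (i j : 'I_3) : kdelta i j = kdelta j i.
Proof. by rewrite !kdeltaE eq_sym. Qed.

Lemma sum_kdelta (F : 'I_3 -> k) (p : 'I_3) : \sum_(c < 3) kdelta c p * F c = F p.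
Proof.
rewrite (bigD1 p) //= big1 ?addr0; first by rewrite kdeltaE eqxx mul1r.
by move=> c /negbTE; rewrite kdeltaE => ->; rewrite mul0r.
Qed.

Lemma eq_hodge (f f' : nat -> k) :
  (forall m : 'I_3, f m = f' m) -> hodge f =2 hodge f'.
Proof. by move=> ff' u v; rewrite /hodge (ff' i0) (ff' i1) (ff' i2). Qed.

Lemma hodgeZ (f : nat -> k) a u v : hodge (fun m => f m * a) u v = hodge f u v * a.
Proof.
by rewrite /hodge; case: (nat_of_ord u) => [|[|[|?]]]; case: (nat_of_ord v) => [|[|[|?]]]; ring.
Qed.

Lemma hodge_anti (C : 'I_3 -> 'I_3 -> k) :
  (forall u v, C u v = - C v u) -> (forall u, C u u = 0) ->
  forall u v, hodge (fun m => C (cyc1 m) (cyc2 m)) u v = C u v.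
Proof.
move=> Canti Cdiag u v; elim/ord3P: u; elim/ord3P: v; rewrite /hodge /= ?Cdiag //.
all: by rewrite ?[C i2 i1]Canti ?[C i0 i2]Canti ?[C i1 i0]Canti ?opprK.
Qed.

End Coordinates.

Section Tensors.
Variable k : fieldType.

Definition e2 (i j : 'I_3) : T2 k := [ffun p : 'I_3 * 'I_3 => kdelta k p.1 i * kdelta k p.2 j].
Definition e3 (p : 'I_3 * 'I_3 * 'I_3) : T3 k :=
  [ffun t : 'I_3 * 'I_3 * 'I_3 => kdelta k t.1.1 p.1.1 * kdelta k t.1.2 p.1.2 * kdelta k t.2 p.2].
(* [e_x (x) *e_m], where [*e_m = e_(cyc1 m) /\ e_(cyc2 m)]: these span [V (x) Alt_2]. *)
Definition e1hodge (x m : 'I_3) : T3 k :=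
  [ffun t : 'I_3 * 'I_3 * 'I_3 => kdelta k t.1.1 x * hodge (kdelta k m) t.1.2 t.2].

Lemma e2_tens i j : e2 i j = tens2 (evec k i) (evec k j).
Proof. by apply/ffunP => [[u v]]; rewrite !ffunE !mxE /= (kdeltaC k u) (kdeltaC k v). Qed.

Lemma e2_wedge i j : e2 i j - e2 j i = wedge2 (evec k i) (evec k j).
Proof. by rewrite /wedge2 -!e2_tens. Qed.

Lemma T2_expansion (w : T2 k) : w = \sum_(i < 3) \sum_(j < 3) w (i, j) *: e2 i j.
Proof.
apply/ffunP => [[u v]]; rewrite sum_ffunE -[LHS](sum_kdelta (fun i => w (i, v))).
apply: eq_bigr => i _; rewrite sum_ffunE -(sum_kdelta (fun j => w (i, j))) mulr_sumr.
by apply: eq_bigr => j _; rewrite scale_ffunE ffunE /= (kdeltaC k u) (kdeltaC k v); kring k.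
Qed.

Lemma linear_coordE (Y : {linear T2 k -> T2 k}) w u v :
  Y w (u, v) = \sum_(i < 3) \sum_(j < 3) w (i, j) * Y (e2 i j) (u, v).
Proof.
rewrite {1}(T2_expansion w) linear_sum sum_ffunE; apply: eq_bigr => i _.
by rewrite linear_sum sum_ffunE; apply: eq_bigr => j _; rewrite linearZ scale_ffunE.
Qed.

Lemma T3_expansion (w : T3 k) : w = \sum_p w p *: e3 p.
Proof.
apply/ffunP => t; rewrite sum_ffunE (bigD1 t) //= big1 ?addr0.
  by rewrite scale_ffunE ffunE !kdeltaE !eqxx !mulr1.
move=> [[x y] z]; case: t => [[x' y'] z'] /=.
rewrite !xpair_eqE scale_ffunE ffunE /= (kdeltaC k x') (kdeltaC k y') (kdeltaC k z') !kdeltaE.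
by case: eqP => [->|_]; case: eqP => [->|_]; case: eqP => [->|_]; rewrite /= ?(mulr0, mul0r).
Qed.

Lemma Alt2_anti (w : T2 k) : Alt2 w -> forall i j, w (i, j) = - w (j, i).
Proof.
case=> n [c [x [y ->]]] i j; rewrite !sum_ffunE -sumrN.
by apply: eq_bigr => p _; rewrite !ffunE /=; kring k.
Qed.

Lemma Alt2_diag (w : T2 k) : Alt2 w -> forall i, w (i, i) = 0.
Proof.
case=> n [c [x [y ->]]] i; rewrite !sum_ffunE big1 // => p _.
by rewrite !ffunE /=; kring k.
Qed.

Lemma Alt2_wedge (x y : V k) : Alt2 (wedge2 x y).
Proof. by exists 1%N, (fun=> 1), (fun=> x), (fun=> y); rewrite big_ord1 scale1r. Qed.

Lemma Alt2_e2 i j : Alt2 (e2 i j - e2 j i).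
Proof. by rewrite e2_wedge; apply: Alt2_wedge. Qed.

Lemma V_Alt2_anti (w : T3 k) : V_Alt2 w -> forall x i j, w (x, i, j) = - w (x, j, i).
Proof.
case=> n [x [u [Au ->]]] y i j; rewrite !sum_ffunE -sumrN.
by apply: eq_bigr => p _; rewrite !ffunE /= (Alt2_anti (Au p)); kring k.
Qed.

Lemma V_Alt2_diag (w : T3 k) : V_Alt2 w -> forall x i, w (x, i, i) = 0.
Proof.
case=> n [x [u [Au ->]]] y i; rewrite !sum_ffunE big1 // => p _.
by rewrite !ffunE /= (Alt2_diag (Au p)) mulr0.
Qed.

Lemma V_Alt2_e1hodge x m : V_Alt2 (e1hodge x m).
Proof.
exists 1%N, (fun=> evec k x), (fun=> wedge2 (evec k (cyc1 m)) (evec k (cyc2 m))).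
split=> [_|]; first exact: Alt2_wedge.
rewrite big_ord1; apply/ffunP => [[[c d] f]]; rewrite !ffunE !mxE /= (kdeltaC k c).
congr (_ * _); elim/ord3P: m; elim/ord3P: d; elim/ord3P: f; cbv [hodge kdelta cyc1 cyc2 nat_of_ord]; kring k.
Qed.

Lemma wedge3_levi (x y z : V k) i j l :
  wedge3 x y z (i, j, l) = levi k i j l * wedge3 x y z (i0, i1, i2).
Proof.
rewrite !ffunE /=; elim/ord3P: i; elim/ord3P: j; elim/ord3P: l; cbv [levi nat_of_ord]; kring k.
Qed.

Lemma Alt3P (t : T3 k) :
  Alt3 t <-> forall i j l, t (i, j, l) = levi k i j l * t (i0, i1, i2).
Proof.
split=> [[n [c [x [y [z ->]]]]] i j l | levi_t].
  rewrite !sum_ffunE mulr_sumr; apply: eq_bigr => p _.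
  by rewrite !scale_ffunE wedge3_levi; kring k.
exists 1%N, (fun=> t (i0, i1, i2)), (fun=> evec k i0), (fun=> evec k i1), (fun=> evec k i2).
apply/ffunP => [[[i j] l]]; rewrite big_ord1 ffunE levi_t mulrC; congr (_ * _).
rewrite !ffunE !mxE /=; elim/ord3P: i; elim/ord3P: j; elim/ord3P: l; cbv [levi kdelta nat_of_ord]; kring k.
Qed.

Lemma Alt3B (t t' : T3 k) : Alt3 t -> Alt3 t' -> Alt3 (t - t').
Proof.
move=> /Alt3P At /Alt3P At'; apply/Alt3P => i j l.
by rewrite !ffunE At At'; kring k.
Qed.

End Tensors.

(** * The normal form of [Y] *)

Fact IdY_is_linear (k : fieldType) (Y : {linear T2 k -> T2 k}) : linear (IdY Y).
Proof.
move=> a w w'; apply/ffunP => t; rewrite ffunE.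
have -> : [ffun jl : 'I_3 * 'I_3 => (a *: w + w') (t.1.1, jl.1, jl.2)] =
    a *: [ffun jl : 'I_3 * 'I_3 => w (t.1.1, jl.1, jl.2)]
    + [ffun jl : 'I_3 * 'I_3 => w' (t.1.1, jl.1, jl.2)].
  by apply/ffunP => jl; rewrite !ffunE.
by rewrite linearP !ffunE.
Qed.

Fact YId_is_linear (k : fieldType) (Y : {linear T2 k -> T2 k}) : linear (YId Y).
Proof.
move=> a w w'; apply/ffunP => t; rewrite ffunE.
have -> : [ffun ij : 'I_3 * 'I_3 => (a *: w + w') (ij.1, ij.2, t.2)] =
    a *: [ffun ij : 'I_3 * 'I_3 => w (ij.1, ij.2, t.2)]
    + [ffun ij : 'I_3 * 'I_3 => w' (ij.1, ij.2, t.2)].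
  by apply/ffunP => ij; rewrite !ffunE.
by rewrite linearP !ffunE.
Qed.

HB.instance Definition _ (k : fieldType) (Y : {linear T2 k -> T2 k}) :=
  GRing.isLinear.Build k (T3 k) (T3 k) *:%R (IdY Y) (IdY_is_linear Y).
HB.instance Definition _ (k : fieldType) (Y : {linear T2 k -> T2 k}) :=
  GRing.isLinear.Build k (T3 k) (T3 k) *:%R (YId Y) (YId_is_linear Y).

Lemma IdY_ext (k : fieldType) (Y Y' : T2 k -> T2 k) :
  Y =1 Y' -> IdY Y =1 IdY Y'.
Proof. by move=> YY' w; apply/ffunP => t; rewrite !ffunE YY'. Qed.

Lemma YId_ext (k : fieldType) (Y Y' : T2 k -> T2 k) :
  Y =1 Y' -> YId Y =1 YId Y'.
Proof. by move=> YY' w; apply/ffunP => t; rewrite !ffunE YY'. Qed.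

Section ModelOperator.
Variable k : fieldType.
Implicit Types (s : nat -> nat -> nat -> k) (h : k).

(* [Y (e_i e_j) = *s_ij + h e_i /\ e_j] with [*] the Hodge star; the array
   [s i j m] is symmetric in [i, j] and only its entries with [i <= j] are read. *)
Definition Ycoef s h (i j u v : 'I_3) : k :=
  hodge (fun m => utri (fun a b => s a b m) i j) u v
  + h * (kdelta k i u * kdelta k j v - kdelta k i v * kdelta k j u).

Definition Ymodel s h (w : T2 k) : T2 k :=
  [ffun p : 'I_3 * 'I_3 => \sum_(i < 3) \sum_(j < 3) w (i, j) * Ycoef s h i j p.1 p.2].

Fact Ymodel_is_linear s h : linear (Ymodel s h).
Proof.
move=> a w w'; apply/ffunP => p; rewrite !ffunE scaleoE mulr_sumr -big_split.
apply: eq_bigr => i _; rewrite mulr_sumr -big_split; apply: eq_bigr => j _ /=.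
by rewrite !ffunE; kring k.
Qed.

End ModelOperator.

HB.instance Definition _ (k : fieldType) s h :=
  GRing.isLinear.Build k (T2 k) (T2 k) *:%R (Ymodel s h) (@Ymodel_is_linear k s h).

Section ModelOperatorTheory.
Variable k : fieldType.
Implicit Types (s : nat -> nat -> nat -> k) (h : k).

Lemma Ycoef_anti s h i j u v : Ycoef s h i j u v = - Ycoef s h i j v u.
Proof.
elim/ord3P: u; elim/ord3P: v; cbv [Ycoef hodge nat_of_ord].
all: by rewrite ?(kdeltaC k i) ?(kdeltaC k j); kring k.
Qed.

Lemma Ycoef_diag s h i j u : Ycoef s h i j u u = 0.
Proof. by elim/ord3P: u; cbv [Ycoef hodge nat_of_ord]; kring k. Qed.

Lemma Ymodel_Alt2 s h w : Alt2 w -> Ymodel s h w = (2%:R * h) *: w.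
Proof.
move=> Aw; have [anti diag] := (Alt2_anti Aw, Alt2_diag Aw).
apply/ffunP => [[u v]]; rewrite scale_ffunE ffunE /= big_ord3 /sum3 !big_ord3 /sum3 !diag.
rewrite (anti i1 i0) (anti i2 i0) (anti i2 i1).
elim/ord3P: u; elim/ord3P: v; rewrite ?diag ?(anti i1 i0) ?(anti i2 i0) ?(anti i2 i1).
all: by cbv [Ycoef utri hodge kdelta nat_of_ord]; kring k.
Qed.

Lemma IdY_Ymodel s h w i j l :
  IdY (Ymodel s h) w (i, j, l) = sum3 (fun a => sum3 (fun b => w (i, a, b) * Ycoef s h a b j l)).
Proof.
rewrite !ffunE big_ord3; apply: eq_sum3 => a; rewrite big_ord3.
by apply: eq_sum3 => b; rewrite ffunE.
Qed.

Lemma YId_Ymodel s h w i j l :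
  YId (Ymodel s h) w (i, j, l) = sum3 (fun a => sum3 (fun b => w (a, b, l) * Ycoef s h a b i j)).
Proof.
rewrite !ffunE big_ord3; apply: eq_sum3 => a; rewrite big_ord3.
by apply: eq_sum3 => b; rewrite ffunE.
Qed.

Lemma IdY_Ymodel_anti s h w x i j :
  IdY (Ymodel s h) w (x, i, j) = - IdY (Ymodel s h) w (x, j, i).
Proof.
rewrite !IdY_Ymodel /sum3 !(Ycoef_anti s h _ _ i j); kring k.
Qed.

Lemma IdY_Ymodel_diag s h w x i : IdY (Ymodel s h) w (x, i, i) = 0.
Proof. by rewrite IdY_Ymodel /sum3 !Ycoef_diag; kring k. Qed.

Lemma YId_Ymodel_anti s h w l i j :
  YId (Ymodel s h) w (i, j, l) = - YId (Ymodel s h) w (j, i, l).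
Proof.
rewrite !YId_Ymodel /sum3 !(Ycoef_anti s h _ _ i j); kring k.
Qed.

Lemma YId_Ymodel_diag s h w l i : YId (Ymodel s h) w (i, i, l) = 0.
Proof. by rewrite YId_Ymodel /sum3 !Ycoef_diag; kring k. Qed.

Lemma IdY_YId_Ymodel s h (w : T3 k) (W : 'I_3 -> 'I_3 -> 'I_3 -> k) :
  (forall c d b, w (c, d, b) = W c d b) -> forall i j l,
  IdY (Ymodel s h) (YId (Ymodel s h) w) (i, j, l) =
  sum3 (fun a => sum3 (fun b =>
    sum3 (fun c => sum3 (fun d => W c d b * Ycoef s h c d i a)) * Ycoef s h a b j l)).
Proof.
move=> wW i j l; rewrite IdY_Ymodel; apply: eq_sum3 => a; apply: eq_sum3 => b.
by rewrite YId_Ymodel; congr (_ * _); apply: eq_sum3 => c; apply: eq_sum3 => d; rewrite wW.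
Qed.

Lemma YId_IdY_Ymodel s h (w : T3 k) (W : 'I_3 -> 'I_3 -> 'I_3 -> k) :
  (forall a c d, w (a, c, d) = W a c d) -> forall i j l,
  YId (Ymodel s h) (IdY (Ymodel s h) w) (i, j, l) =
  sum3 (fun a => sum3 (fun b =>
    sum3 (fun c => sum3 (fun d => W a c d * Ycoef s h c d b l)) * Ycoef s h a b i j)).
Proof.
move=> wW i j l; rewrite YId_Ymodel; apply: eq_sum3 => a; apply: eq_sum3 => b.
by rewrite IdY_Ymodel; congr (_ * _); apply: eq_sum3 => c; apply: eq_sum3 => d; rewrite wW.
Qed.

Lemma IdY_e3 s h p i j l :
  IdY (Ymodel s h) (e3 k p) (i, j, l) = kdelta k i p.1.1 * Ycoef s h p.1.2 p.2 j l.
Proof.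
rewrite IdY_Ymodel /sum3 !ffunE /=; case: p => [[x y] z] /=.
by elim/ord3P: y; elim/ord3P: z; cbv [kdelta nat_of_ord]; kring k.
Qed.

Lemma YId_e3 s h p i j l :
  YId (Ymodel s h) (e3 k p) (i, j, l) = kdelta k l p.2 * Ycoef s h p.1.1 p.1.2 i j.
Proof.
rewrite YId_Ymodel /sum3 !ffunE /=; case: p => [[x y] z] /=.
by elim/ord3P: x; elim/ord3P: y; cbv [kdelta nat_of_ord]; kring k.
Qed.

End ModelOperatorTheory.

(** * The operators of the theorem *)

Section TheoremFamily.
Variable k : fieldType.

(* The structure constants [s_ij^m = c_i G_jm + c_j G_im - c_m G_ij] of the
   operators of the theorem, with [c = a x b] and [G] the Gram matrix of [g]. *)
Definition sym_cg (c : nat -> k) (G : nat -> nat -> k) (i j m : nat) : k :=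
  c i * utri G j m + c j * utri G i m - c m * utri G i j.

(* For [P = c (x) G] this is [c^T adj(G) c]. *)
Definition adjq (P : nat -> nat -> nat -> k) : k :=
  sum3 (fun m => sum3 (fun n =>
    P m (cyc1 m) (cyc1 n) * P n (cyc2 m) (cyc2 n) - P m (cyc1 m) (cyc2 n) * P n (cyc2 m) (cyc1 n))).

Definition adj_form (c : nat -> k) (G : nat -> nat -> k) : k :=
  adjq (fun m i j => c m * utri G i j).

Lemma adjq_ext (P P' : nat -> nat -> nat -> k) :
  (forall m i j : 'I_3, P m i j = P' m i j) -> adjq P = adjq P'.
Proof. by move=> PP'; apply: eq_sum3 => m; apply: eq_sum3 => n; rewrite !PP'. Qed.

Variables (c : nat -> k) (G : nat -> nat -> k) (h q : k).
Hypothesis hq : q = h ^+ 2 + adj_form c G.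
Local Notation Y := (Ymodel (sym_cg c G) h).

Lemma Ymodel_condB (w : T3 k) :
  (forall x i j, w (x, i, j) = - w (x, j, i)) -> (forall x i, w (x, i, i) = 0) ->
  Alt3 (IdY Y (YId Y w) - q *: w).
Proof.
move=> anti diag.
pose W x d b := hodge (fun m => w (x, cyc1 m, cyc2 m)) d b.
have wW x d b : w (x, d, b) = W x d b.
  by symmetry; apply: (@hodge_anti k (fun d b => w (x, d, b))).
apply/Alt3P => i j l; rewrite hq !sub_ffunE !scale_ffunE !(IdY_YId_Ymodel _ _ wW) !wW.
elim/ord3P: i; elim/ord3P: j; elim/ord3P: l.
all: by cbv [W sum3 Ycoef sym_cg adj_form adjq utri hodge kdelta levi cyc1 cyc2 nat_of_ord]; kring k.
Qed.

Lemma Ymodel_condB' (w : T3 k) :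
  (forall x i j, w (i, j, x) = - w (j, i, x)) -> (forall x i, w (i, i, x) = 0) ->
  Alt3 (YId Y (IdY Y w) - q *: w).
Proof.
move=> anti diag.
pose W a b x := hodge (fun m => w (cyc1 m, cyc2 m, x)) a b.
have wW a b x : w (a, b, x) = W a b x.
  by symmetry; apply: (@hodge_anti k (fun a b => w (a, b, x))).
apply/Alt3P => i j l; rewrite hq !sub_ffunE !scale_ffunE !(YId_IdY_Ymodel _ _ wW) !wW.
elim/ord3P: i; elim/ord3P: j; elim/ord3P: l.
all: by cbv [W sum3 Ycoef sym_cg adj_form adjq utri hodge kdelta levi cyc1 cyc2 nat_of_ord]; kring k.
Qed.

Let Z (u : T3 k) : T3 k :=
  (IdY Y (YId Y (IdY Y u)) - q *: IdY Y u) - (YId Y (IdY Y (YId Y u)) - q *: YId Y u).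

Let Z_linear : linear Z.
Proof. by move=> a u u'; apply/ffunP => t; rewrite /Z !linearP !ffunE; kring k. Qed.

Let Alt3_Z u : Alt3 (Z u).
Proof.
apply: Alt3B; first apply: Ymodel_condB.
- exact: IdY_Ymodel_anti.
- exact: IdY_Ymodel_diag.
apply: Ymodel_condB'.
- by move=> x i j; apply: YId_Ymodel_anti.
- by move=> x i; apply: YId_Ymodel_diag.
Qed.

Let Z_e3 p : Z (e3 k p) = 0.
Proof.
have Z012 : Z (e3 k p) (i0, i1, i2) = 0.
  rewrite /Z !sub_ffunE !scale_ffunE (IdY_YId_Ymodel _ _ (IdY_e3 _ _ p)).
  rewrite (YId_IdY_Ymodel _ _ (YId_e3 (sym_cg c G) h p)) !IdY_e3 !YId_e3 hq.
  case: p => [[x y] z] /=; elim/ord3P: x; elim/ord3P: y; elim/ord3P: z;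
    by cbv [sum3 Ycoef sym_cg adj_form adjq utri hodge kdelta cyc1 cyc2 nat_of_ord]; kring k.
have /Alt3P levi_Z := Alt3_Z (e3 k p).
by apply/ffunP => [[[i j] l]]; rewrite levi_Z Z012 mulr0 ffunE.
Qed.

Lemma Ymodel_braid u :
  IdY Y (YId Y (IdY Y u)) - q *: IdY Y u = YId Y (IdY Y (YId Y u)) - q *: YId Y u.
Proof.
apply/eqP; rewrite -subr_eq0; apply/eqP.
pose ZL : {linear T3 k -> T3 k} := HB.pack Z (GRing.isLinear.Build _ _ _ _ Z Z_linear).
rewrite -[LHS]/(ZL u) (T3_expansion u) linear_sum big1 // => p _.
by rewrite linearZ /= Z_e3 scaler0.
Qed.

End TheoremFamily.

Section FormulaOperators.
Variable k : fieldType.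

Definition row3 (x y z : k) : V k :=
  \row_(j < 3) match nat_of_ord j with 0%N => x | 1%N => y | _ => z end.

Definition cross (a b : V k) (m : nat) : k :=
  a ord0 (cyc1 m) * b ord0 (cyc2 m) - a ord0 (cyc2 m) * b ord0 (cyc1 m).

Definition gram_form (G : nat -> nat -> k) (x y : V k) : k :=
  sum3 (fun i => sum3 (fun j => x ord0 i * y ord0 j * utri G i j)).

Definition gram_matrix (g : V k -> V k -> k) (i j : nat) : k :=
  g (evec k (ord_of i)) (evec k (ord_of j)).

Definition Yformula (a b : V k) (g : V k -> V k -> k) (h : k) (x y : V k) : T2 k :=
  g x y *: wedge2 a b + wedge2 x (g b y *: a - g a y *: b)
  + wedge2 y (g b x *: a - g a x *: b) + h *: wedge2 x y.

Lemma cross_surj (c : nat -> k) : exists a b, forall m : 'I_3, cross a b m = c m.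
Proof.
suff [a [b [c0 c1 c2]]] : exists a b,
    [/\ cross a b 0 = c 0%N, cross a b 1 = c 1%N & cross a b 2 = c 2%N].
  by exists a, b; elim/ord3P.
have [c0_0|c0_neq0] := eqVneq (c 0%N) 0; last first.
  exists (row3 (- c 1%N / c 0%N) 1 0), (row3 (- c 2%N) 0 (c 0%N)).
  by rewrite /cross !mxE /=; split; field.
have [c1_0|c1_neq0] := eqVneq (c 1%N) 0; last first.
  exists (row3 0 (- c 2%N / c 1%N) 1), (row3 (c 1%N) (- c 0%N) 0).
  by rewrite /cross !mxE /=; split; field.
have [c2_0|c2_neq0] := eqVneq (c 2%N) 0; last first.
  exists (row3 1 0 (- c 0%N / c 2%N)), (row3 0 (c 2%N) (- c 1%N)).
  by rewrite /cross !mxE /=; split; field.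
by exists 0, 0; rewrite /cross !mxE c0_0 c1_0 c2_0; split; ring.
Qed.

Lemma gram_formC G x y : gram_form G x y = gram_form G y x.
Proof. by cbv [gram_form sum3 utri nat_of_ord]; ring. Qed.

Lemma gram_formDr G a x y z :
  gram_form G x (a *: y + z) = a * gram_form G x y + gram_form G x z.
Proof. by cbv [gram_form sum3 utri]; rewrite !mxE; ring. Qed.

Lemma bilinear_gram_form (g : V k -> V k -> k) :
  (forall x y, g x y = g y x) ->
  (forall a x y z, g x (a *: y + z) = a * g x y + g x z) ->
  g =2 gram_form (gram_matrix g).
Proof.
move=> gC gDr.
have g0 x : g x 0 = 0.
  by have := gDr 1 x 0 0; rewrite scale1r addr0 mul1r -{1}[g x 0]addr0 => /addrI <-.
have gE x y : g x y = sum3 (fun j => y ord0 j * g x (evec k j)).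
  have yE : y = y ord0 i0 *: evec k i0 + (y ord0 i1 *: evec k i1 + (y ord0 i2 *: evec k i2 + 0)).
    by apply/rowP; elim/ord3P; rewrite !mxE; cbv [kdelta nat_of_ord]; ring.
  by rewrite {1}yE !gDr g0 /sum3; ring.
move=> x y; rewrite gE /sum3 ![g x _]gC (gE (evec k i0)) (gE (evec k i1)) (gE (evec k i2)).
rewrite /gram_form /sum3; cbv [gram_matrix utri ord_of nat_of_ord].
rewrite (gC (evec k i1) (evec k i0)) (gC (evec k i2) (evec k i0)) (gC (evec k i2) (evec k i1)).
ring.
Qed.

Lemma gram_form_lagrange G a b :
  gram_form G a a * gram_form G b b - gram_form G a b ^+ 2 = adj_form (cross a b) G.
Proof. by cbv [gram_form adj_form adjq cross sum3 utri cyc1 cyc2 nat_of_ord]; ring. Qed.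

Lemma Yformula_coord G a b h x y u v :
  Yformula a b (gram_form G) h x y (u, v) =
  sum3 (fun i => sum3 (fun j => x ord0 i * y ord0 j * Ycoef (sym_cg (cross a b) G) h i j u v)).
Proof.
elim/ord3P: u; elim/ord3P: v; rewrite !ffunE /= !mxE.
all: by cbv [gram_form sum3 Ycoef sym_cg cross utri hodge kdelta cyc1 cyc2 nat_of_ord]; kring k.
Qed.

End FormulaOperators.

(** * Conditions (A) and (B) force the normal form *)

Section NormalForm.
Variable k : fieldType.
Hypothesis two_neq0 : (2%:R : k) != 0.

Definition sym_coef (Y : T2 k -> T2 k) (i j m : nat) : k :=
  (Y (e2 k (ord_of i) (ord_of j)) (cyc1 m, cyc2 m)
   + Y (e2 k (ord_of j) (ord_of i)) (cyc1 m, cyc2 m)) / 2%:R.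

Lemma Y_eq_Ymodel (Y : {linear T2 k -> T2 k}) q :
  (forall w, Alt2 (Y w)) -> (forall w, Alt2 w -> Y w = (q + 1) *: w) ->
  Y =1 Ymodel (sym_coef Y) ((q + 1) / 2%:R).
Proof.
move=> imY condA.
suff Ye2 i j u v : Y (e2 k i j) (u, v) = Ycoef (sym_coef Y) ((q + 1) / 2%:R) i j u v.
  move=> w; apply/ffunP => [[u v]]; rewrite linear_coordE ffunE.
  by apply: eq_bigr => i _; apply: eq_bigr => j _; rewrite Ye2.
pose C a b : k := Y (e2 k i j) (a, b) + Y (e2 k j i) (a, b).
have sym_part : hodge (fun m => utri (fun a b => sym_coef Y a b m) i j) u v = C u v / 2%:R.
  have sym_coefE m : utri (fun a b => sym_coef Y a b m) i j = C (cyc1 m) (cyc2 m) / 2%:R.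
    by rewrite /C; clear C; elim/ord3P: i; elim/ord3P: j; cbv [utri sym_coef ord_of nat_of_ord]; kring k.
  rewrite (@eq_hodge _ _ (fun m => C (cyc1 m) (cyc2 m) / 2%:R) (fun m => sym_coefE m)) hodgeZ.
  rewrite hodge_anti // => [a b | a]; rewrite /C.
    by rewrite (Alt2_anti (imY (e2 k i j))) (Alt2_anti (imY (e2 k j i))) opprD.
  by rewrite !(Alt2_diag (imY _)) addr0.
have alt_part : Y (e2 k i j) (u, v) - Y (e2 k j i) (u, v) =
    (q + 1) * (kdelta k i u * kdelta k j v - kdelta k i v * kdelta k j u).
  have := congr1 (fun w : T2 k => w (u, v)) (condA _ (Alt2_e2 k i j)).
  rewrite linearB /= sub_ffunE => ->; rewrite !ffunE /= (kdeltaC k u) (kdeltaC k v).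
  by rewrite (kdeltaC k u j) (kdeltaC k v i); kring k.
by rewrite /Ycoef sym_part /C mulrAC -alt_part; field.
Qed.

End NormalForm.

Section RankOne.
Variable k : fieldType.

Definition minor2 (P : nat -> nat -> k) (m m' n n' : nat) : k :=
  P m n * P m' n' - P m n' * P m' n.

Lemma rank1_factor (M N : nat) (P : nat -> nat -> k) :
  (forall m m' n n', (m < m' < M)%N -> (n < n' < N)%N -> minor2 P m m' n n' = 0) ->
  exists (c : nat -> k) (G : nat -> k), forall m n, (m < M)%N -> (n < N)%N -> P m n = c m * G n.
Proof.
move=> minor0.
have minorE m m' n n' : (m < M)%N -> (m' < M)%N -> (n < N)%N -> (n' < N)%N ->
    P m n * P m' n' = P m n' * P m' n.
  move=> ltm ltm' ltn ltn'; apply/eqP; rewrite -subr_eq0 -/(minor2 P m m' n n'); apply/eqP.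
  have swapm i i' j j' : minor2 P i i' j j' = - minor2 P i' i j j' by rewrite /minor2; ring.
  have swapn i i' j j' : minor2 P i i' j j' = - minor2 P i i' j' j by rewrite /minor2; ring.
  have [lt_mm'|lt_m'm|<-] := ltngtP m m'; last by rewrite /minor2 mulrC subrr.
  - have [lt_nn'|lt_n'n|<-] := ltngtP n n'; last by rewrite /minor2 subrr.
      by rewrite minor0 ?lt_mm' ?lt_nn'.
    by rewrite swapn minor0 ?oppr0 ?lt_mm' ?lt_n'n.
  - have [lt_nn'|lt_n'n|<-] := ltngtP n n'; last by rewrite /minor2 subrr.
      by rewrite swapm minor0 ?oppr0 ?lt_m'm ?lt_nn'.
    by rewrite swapm swapn minor0 ?oppr0 ?lt_m'm ?lt_n'n.
have [/existsP[m0 /existsP[n0 Pm0n0]] | all0] :=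
  boolP [exists m : 'I_M, exists n : 'I_N, P m n != 0].
  exists (fun m => P m n0), (fun n => P m0 n / P m0 n0) => m n ltm ltn.
  by rewrite mulrA -(minorE m m0 n n0) // mulfK.
exists (fun=> 0), (fun=> 0) => m n ltm ltn; rewrite mul0r.
by move/existsPn: all0 => /(_ (Ordinal ltm)) /existsPn /(_ (Ordinal ltn)) /negPn /eqP.
Qed.

End RankOne.

Section ConditionB.
Variable k : fieldType.
Implicit Types (s : nat -> nat -> nat -> k) (h q : k).

Definition condB_lhs s h q (x m i j l : 'I_3) : k :=
  sum3 (fun a => sum3 (fun b => sum3 (fun c => sum3 (fun d =>
    kdelta k c x * hodge (kdelta k m) d b * Ycoef s h c d i a)) * Ycoef s h a b j l))
  - q * (kdelta k i x * hodge (kdelta k m) j l).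

Definition condB_coord s h q x m i j l : k :=
  condB_lhs s h q x m i j l - levi k i j l * condB_lhs s h q x m i0 i1 i2.

Lemma condB_coord_eq0 s h q x m :
  Alt3 (IdY (Ymodel s h) (YId (Ymodel s h) (e1hodge k x m)) - q *: e1hodge k x m) ->
  forall i j l, condB_coord s h q x m i j l = 0.
Proof.
have wW c d b : e1hodge k x m (c, d, b) = kdelta k c x * hodge (kdelta k m) d b.
  by rewrite ffunE.
move=> /Alt3P levi_B i j l; apply/eqP; rewrite subr_eq0; apply/eqP.
by move: (levi_B i j l); rewrite !sub_ffunE !scale_ffunE !(IdY_YId_Ymodel _ _ wW) !wW.
Qed.

Definition Pmat s (m i j : nat) : k :=
  utri (fun a b => s a b j) m i + utri (fun a b => s a b i) m j.

Definition col6 (n : nat) : nat * nat :=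
  match n with
  | 0%N => (0, 0) | 1%N => (0, 1) | 2%N => (0, 2) | 3%N => (1, 1) | 4%N => (1, 2)
  | _ => (2, 2) end%N.

Definition Pcol s (m n : nat) : k := Pmat s m (col6 n).1 (col6 n).2.

(* Each 2 x 2 minor of [Pcol s] is a fixed linear combination of the coordinate
   equations of condition (B); these are the coefficients. *)
Definition minor_cert (R : 'I_3 -> 'I_3 -> 'I_3 -> 'I_3 -> 'I_3 -> k) (m m' n n' : nat) : k :=
  match m, m', n, n' with
  | 0, 1, 0, 1 => - 2 * R i0 i2 i2 i1 i2
  | 0, 1, 0, 2 => 2 * R i0 i2 i1 i1 i2
  | 0, 1, 0, 3 => 4 * R i0 i2 i2 i0 i2
  | 0, 1, 0, 4 => 2 * R i0 i0 i2 i1 i2 - 2 * R i0 i1 i2 i0 i2 + 2 * R i1 i2 i1 i1 i2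
  | 0, 1, 0, 5 => 4 * R i0 i2 i1 i0 i1
  | 0, 1, 1, 2 => R i0 i2 i2 i0 i1 + R i1 i2 i1 i1 i2
  | 0, 1, 1, 3 => 2 * R i1 i2 i2 i0 i2
  | 0, 1, 1, 4 => - R i0 i0 i2 i0 i2 - R i1 i1 i2 i0 i2 - R i1 i2 i1 i0 i2
  | 0, 1, 1, 5 => - 2 * R i2 i2 i1 i0 i2
  | 0, 1, 2, 3 => - 2 * R i0 i0 i2 i0 i2 - 2 * R i0 i2 i0 i0 i2 - 2 * R i1 i1 i2 i0 i2
  | 0, 1, 2, 4 => - R i0 i0 i1 i0 i2 + R i0 i2 i0 i0 i1 - R i1 i0 i1 i1 i2
                  + R i1 i1 i2 i0 i1 + R i2 i0 i2 i1 i2 - R i2 i2 i1 i0 i2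
  | 0, 1, 2, 5 => - 2 * R i0 i0 i1 i0 i1 - 2 * R i1 i1 i1 i0 i1
  | 0, 1, 3, 4 => 2 * R i1 i2 i0 i0 i2
  | 0, 1, 3, 5 => - 4 * R i1 i2 i0 i0 i1
  | 0, 1, 4, 5 => 2 * R i0 i0 i0 i0 i1 + 2 * R i1 i1 i0 i0 i1
  | 0, 2, 0, 1 => 2 * R i0 i1 i2 i1 i2
  | 0, 2, 0, 2 => - 2 * R i0 i1 i1 i1 i2
  | 0, 2, 0, 3 => - 4 * R i0 i1 i2 i0 i2
  | 0, 2, 0, 4 => 2 * R i0 i0 i1 i1 i2 + 2 * R i0 i2 i1 i0 i1 + 2 * R i2 i1 i2 i1 i2
  | 0, 2, 0, 5 => - 4 * R i0 i1 i1 i0 i1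
  | 0, 2, 1, 2 => R i0 i1 i1 i0 i2 - R i2 i1 i2 i1 i2
  | 0, 2, 1, 3 => - 2 * R i1 i1 i2 i0 i2
  | 0, 2, 1, 4 => - R i0 i0 i1 i0 i2 - R i0 i1 i0 i0 i2 + R i1 i1 i2 i0 i1 - R i2 i2 i1 i0 i2
  | 0, 2, 1, 5 => 2 * R i0 i1 i0 i0 i1 - 2 * R i1 i1 i1 i0 i1
  | 0, 2, 2, 3 => 2 * R i1 i1 i2 i0 i1
  | 0, 2, 2, 4 => - R i1 i1 i1 i0 i1 + R i2 i1 i2 i0 i1
  | 0, 2, 2, 5 => - 2 * R i2 i1 i1 i0 i1
  | 0, 2, 3, 4 => 2 * R i0 i0 i0 i0 i2 - 2 * R i1 i2 i0 i0 i1
  | 0, 2, 3, 5 => 4 * R i1 i1 i0 i0 i1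
  | 0, 2, 4, 5 => 2 * R i2 i1 i0 i0 i1
  | 1, 2, 0, 1 => - 2 * R i0 i0 i2 i1 i2
  | 1, 2, 0, 2 => 2 * R i0 i0 i1 i1 i2
  | 1, 2, 0, 3 => 4 * R i0 i0 i2 i0 i2
  | 1, 2, 0, 4 => 2 * R i1 i0 i1 i1 i2 - 2 * R i2 i0 i2 i1 i2
  | 1, 2, 0, 5 => 4 * R i0 i0 i1 i0 i1
  | 1, 2, 1, 2 => - R i0 i0 i1 i0 i2 + R i2 i0 i2 i1 i2
  | 1, 2, 1, 3 => 2 * R i1 i0 i2 i0 i2
  | 1, 2, 1, 4 => R i0 i0 i0 i0 i2 - R i1 i0 i1 i0 i2 - R i1 i0 i2 i0 i1
  | 1, 2, 1, 5 => - 2 * R i0 i0 i0 i0 i1 + 2 * R i1 i0 i1 i0 i1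
  | 1, 2, 2, 3 => - 2 * R i1 i0 i2 i0 i1
  | 1, 2, 2, 4 => R i1 i0 i1 i0 i1 - R i2 i0 i2 i0 i1
  | 1, 2, 2, 5 => 2 * R i2 i0 i1 i0 i1
  | 1, 2, 3, 4 => 2 * R i1 i0 i0 i0 i2
  | 1, 2, 3, 5 => - 4 * R i1 i0 i0 i0 i1
  | 1, 2, 4, 5 => - 2 * R i2 i0 i0 i0 i1
  | _, _, _, _ => 0
  end.

Definition delta_cert (R : 'I_3 -> 'I_3 -> 'I_3 -> 'I_3 -> 'I_3 -> k) : k :=
  - 2 * R i0 i0 i1 i0 i2 - 2 * R i0 i1 i0 i0 i2 + 2 * R i0 i2 i0 i0 i1
  - 2 * R i1 i0 i1 i1 i2 + 4 * R i2 i0 i2 i1 i2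
  - minor_cert R 0 1 2 4 - minor_cert R 0 2 1 4 - minor_cert R 1 2 1 2
  + 2 * minor_cert R 0 2 2 3 + 2 * minor_cert R 1 2 0 4.

Lemma minor_certE s h q m m' n n' : (m < m' < 3)%N -> (n < n' < 6)%N ->
  minor2 (Pcol s) m m' n n' = minor_cert (condB_coord s h q) m m' n n'.
Proof.
move=> /andP[+ +] /andP[+ +].
move: m m' n n' => [|[|?]] [|[|[|?]]] [|[|[|[|[|?]]]]] [|[|[|[|[|[|?]]]]]] // _ _ _ _.
all: by cbv [minor2 Pcol col6 Pmat minor_cert condB_coord condB_lhs sum3 Ycoef hodge utri
  kdelta levi nat_of_ord fst snd]; ring.
Qed.

Lemma delta_certE s h q :
  4%:R * (h ^+ 2 - q) + adjq (Pmat s) = delta_cert (condB_coord s h q).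
Proof.
by cbv [adjq Pmat delta_cert minor_cert condB_coord condB_lhs sum3 Ycoef hodge utri kdelta levi
  cyc1 cyc2 nat_of_ord]; ring.
Qed.

Lemma condB_rank1 s h q :
  (forall x m, Alt3 (IdY (Ymodel s h) (YId (Ymodel s h) (e1hodge k x m)) - q *: e1hodge k x m)) ->
  (forall m m' n n', (m < m' < 3)%N -> (n < n' < 6)%N -> minor2 (Pcol s) m m' n n' = 0)
  /\ 4%:R * (h ^+ 2 - q) + adjq (Pmat s) = 0.
Proof.
move=> condB; have coord0 x m := condB_coord_eq0 (condB x m).
split=> [m m' n n' lt_m lt_n|]; last first.
  by rewrite delta_certE; cbv [delta_cert minor_cert]; rewrite !coord0; ring.
rewrite (minor_certE s h q lt_m lt_n); move: lt_m lt_n => /andP[+ +] /andP[+ +].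
move: m m' n n' => [|[|?]] [|[|[|?]]] [|[|[|[|[|?]]]]] [|[|[|[|[|[|?]]]]]] // _ _ _ _.
all: by cbv [minor_cert]; rewrite !coord0; ring.
Qed.

End ConditionB.

Section Forward.
Variable k : fieldType.
Hypothesis two_neq0 : (2%:R : k) != 0.
Implicit Types (s : nat -> nat -> nat -> k) (h q : k).

Definition idx6 (i j : nat) : nat :=
  match i, j with
  | 0, 0 => 0 | 0, 1 | 1, 0 => 1 | 0, 2 | 2, 0 => 2 | 1, 1 => 3 | 1, 2 | 2, 1 => 4 | _, _ => 5
  end%N.

Lemma idx6_lt6 i j : (idx6 i j < 6)%N.
Proof. by rewrite /idx6; case: i => [|[|[|?]]]; case: j => [|[|[|?]]]. Qed.

Lemma Pmat_Pcol s (m i j : 'I_3) : Pmat s m i j = Pcol s m (idx6 i j).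
Proof. by elim/ord3P: i; elim/ord3P: j; cbv [Pcol Pmat col6 idx6 utri nat_of_ord fst snd]; ring. Qed.

(* The structure constants are recovered from their symmetrisations, as the
   Christoffel symbols are from the derivatives of a metric. *)
Lemma Pmat_inv s (i j m : 'I_3) :
  2%:R * utri (fun a b => s a b m) i j = Pmat s i j m + Pmat s j i m - Pmat s m i j.
Proof.
by elim/ord3P: i; elim/ord3P: j; elim/ord3P: m; cbv [Pmat utri nat_of_ord]; ring.
Qed.

Lemma eq_Ycoef s s' h :
  (forall i j m : 'I_3, utri (fun a b => s a b m) i j = utri (fun a b => s' a b m) i j) ->
  forall i j u v, Ycoef s h i j u v = Ycoef s' h i j u v.
Proof. by move=> ss' i j u v; rewrite /Ycoef (@eq_hodge _ _ (fun m => utri (fun a b => s' a b m) i j)). Qed.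

Lemma conditions_model (Y : {linear T2 k -> T2 k}) q :
  (forall w, Alt2 (Y w)) ->
  (forall w, Alt2 w -> Y w = (q + 1) *: w) ->
  (forall w, V_Alt2 w -> Alt3 (IdY Y (YId Y w) - q *: w)) ->
  exists a b G, Y =1 Ymodel (sym_cg (cross a b) G) ((q + 1) / 2%:R)
                /\ q = ((q + 1) / 2%:R) ^+ 2 + adj_form (cross a b) G.
Proof.
move=> imY condA condB; set h := (q + 1) / 2%:R; set s := sym_coef Y.
have YE : Y =1 Ymodel s h := Y_eq_Ymodel two_neq0 imY condA.
have condB_model x m :
    Alt3 (IdY (Ymodel s h) (YId (Ymodel s h) (e1hodge k x m)) - q *: e1hodge k x m).
  by rewrite -(YId_ext YE) -(IdY_ext YE); apply/condB/V_Alt2_e1hodge.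
have [minors0 delta0] := condB_rank1 condB_model.
have [c [G6 PcolE]] := rank1_factor minors0.
have [a [b cross_c]] := cross_surj c.
pose G i j := G6 (idx6 i j) / 2%:R.
have Pfac (m i j : 'I_3) : Pmat s m i j = cross a b m * (2%:R * G i j).
  by rewrite Pmat_Pcol PcolE ?idx6_lt6 // cross_c /G [2%:R * _]mulrC divfK.
exists a, b, G; split.
  move=> w; rewrite YE; apply/ffunP => p; rewrite !ffunE.
  apply: eq_bigr => i _; apply: eq_bigr => j _; congr (_ * _); apply: eq_Ycoef => {}i {}j m.
  apply: (mulfI two_neq0); rewrite Pmat_inv !Pfac.
  by elim/ord3P: i; elim/ord3P: j; elim/ord3P: m; cbv [sym_cg utri G idx6 nat_of_ord]; ring.
have four_neq0 : (4%:R : k) != 0 by rewrite (natrM k 2 2) mulf_neq0.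
apply: (mulfI four_neq0); apply/eqP; rewrite eq_sym -subr_eq0 -[X in _ == X]delta0
  (@adjq_ext _ _ (fun m i j => cross a b m * (2%:R * G i j)) Pfac).
by rewrite /adj_form; apply/eqP; cbv [adjq sum3 utri G idx6 cyc1 cyc2 nat_of_ord]; ring.
Qed.

End Forward.

Section Formula.
Variable k : fieldType.
Hypothesis two_neq0 : (2%:R : k) != 0.
Variables (Y : {linear T2 k -> T2 k}) (q : k) (a b : V k).
Local Notation h := ((q + 1) / 2%:R).

Lemma sum3_kdelta2 (F : 'I_3 -> 'I_3 -> k) (i j : 'I_3) :
  sum3 (fun u => sum3 (fun v => kdelta k i u * kdelta k j v * F u v)) = F i j.
Proof. by elim/ord3P: i; elim/ord3P: j; cbv [sum3 kdelta nat_of_ord]; ring. Qed.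

Lemma eq_Yformula (g g' : V k -> V k -> k) : g =2 g' -> Yformula a b g h =2 Yformula a b g' h.
Proof. by move=> gg' x y; rewrite /Yformula !gg'. Qed.

Lemma Yformula_model (g : V k -> V k -> k) :
  (forall x y, g x y = g y x) ->
  (forall c x y z, g x (c *: y + z) = c * g x y + g x z) ->
  (q - 1) ^+ 2 = - (4%:R * (g a a * g b b - g a b ^+ 2)) ->
  (forall x y, Y (tens2 x y) = Yformula a b g h x y) ->
  Y =1 Ymodel (sym_cg (cross a b) (gram_matrix g)) h
  /\ q = h ^+ 2 + adj_form (cross a b) (gram_matrix g).
Proof.
move=> gC gDr Delta_q YE; have gG := bilinear_gram_form gC gDr; split.
  move=> w; apply/ffunP => [[u v]]; rewrite linear_coordE ffunE.
  apply: eq_bigr => i _; apply: eq_bigr => j _; congr (_ * _).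
  rewrite e2_tens YE (eq_Yformula gG) Yformula_coord.
  rewrite -[RHS](sum3_kdelta2 (fun i' j' => Ycoef (sym_cg (cross a b) (gram_matrix g)) h i' j' u v)).
  by apply: eq_sum3 => i'; apply: eq_sum3 => j'; rewrite !mxE.
have four_neq0 : (4%:R : k) != 0 by rewrite (natrM k 2 2) mulf_neq0.
rewrite -gram_form_lagrange -!gG (_ : g a a * g b b - g a b ^+ 2 = - (q - 1) ^+ 2 / 4%:R).
  by field; rewrite four_neq0 two_neq0.
by rewrite Delta_q opprK [4%:R * _]mulrC mulfK.
Qed.

Lemma model_Yformula (G : nat -> nat -> k) :
  Y =1 Ymodel (sym_cg (cross a b) G) h -> q = h ^+ 2 + adj_form (cross a b) G ->
  (q - 1) ^+ 2 = - (4%:R * (gram_form G a a * gram_form G b b - gram_form G a b ^+ 2))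
  /\ (forall x y, Y (tens2 x y) = Yformula a b (gram_form G) h x y).
Proof.
move=> YE qE; split.
  have adjE : adj_form (cross a b) G = q - h ^+ 2 by rewrite [X in X - _]qE addrC addKr.
  by rewrite gram_form_lagrange adjE; field.
move=> x y; apply/ffunP => [[u v]]; rewrite YE Yformula_coord ffunE /= big_ord3.
by apply: eq_sum3 => i; rewrite big_ord3; apply: eq_sum3 => j; rewrite ffunE.
Qed.

End Formula.

Theorem proposition3p1 (k : fieldType) (hchar : (2%:R : k) != 0)
    (q : k) (hq : q != 0) (Y : {linear T2 k -> T2 k})
    (himY : forall w : T2 k, Alt2 (Y w)) :
  let condA := forall w : T2 k, Alt2 w -> Y w = (q + 1) *: w in
  let condB := forall w : T3 k, V_Alt2 w -> Alt3 (IdY Y (YId Y w) - q *: w) in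
  ((condA /\ condB) <->
   exists (a b : V k) (g : V k -> V k -> k),
     (forall x y : V k, g x y = g y x) /\
     (forall (c : k) (x y z : V k), g x (c *: y + z) = c * g x y + g x z) /\
     let Delta := g a a * g b b - g a b ^+ 2 in
     let T := fun v : V k => g b v *: a - g a v *: b in
     (q - 1) ^+ 2 = - (4%:R * Delta) /\
     (forall x y : V k,
        Y (tens2 x y) = g x y *: wedge2 a b + wedge2 x (T y) + wedge2 y (T x)
                        + ((q + 1) / 2%:R) *: wedge2 x y))
  /\
  ((condA /\ condB) ->
   forall w : T3 k,
     IdY Y (YId Y (IdY Y w)) - q *: IdY Y w
     = YId Y (IdY Y (YId Y w)) - q *: YId Y w).
Proof.
move=> condA condB; split; first split.
- case=> cA cB; have [a [b [G [YE qE]]]] := conditions_model hchar himY cA cB.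
  exists a, b, (gram_form G); split=> [x y|]; first exact: gram_formC.
  by split=> [c x y z|]; [exact: gram_formDr | exact: model_Yformula].
- case=> a [b [g [gC [gDr /= [Delta_q hY]]]]].
  have [YE qE] := Yformula_model hchar gC gDr Delta_q hY.
  split=> [w Aw | w Bw].
    by rewrite YE Ymodel_Alt2 // mulrC divfK.
  rewrite (YId_ext YE) (IdY_ext YE).
  by apply: (Ymodel_condB qE); [apply: V_Alt2_anti | apply: V_Alt2_diag].
- case=> cA cB w; have [a [b [G [YE qE]]]] := conditions_model hchar himY cA cB.
  by rewrite !(IdY_ext YE) !(YId_ext YE) (Ymodel_braid qE).
Qed.
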